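(* For all positive integers $n$ and $k$, $$\sum_{i=1}^{k}(-1)^i\binom{ni}{k}\binom{k+1}{i+1}=(-1)^k\binom{n+k-1}{k}.$$
   Context: Binomial coefficients $\binom{m}{j}$ for nonnegative integers $m,j$ are the usual ones, with $\binom{m}{j}=0$ when $j>m$. *)

From mathcomp Require Import all_boot all_order all_algebra.

(* Write p(x) for the polynomial prod_(t < k) (n x - n - t) of degree k, so that
   p(i+1) = (n i)(n i - 1)...(n i - k + 1) = k! C(n i, k) and
   p(0) = (-1)^k n (n+1)...(n+k-1) = (-1)^k k! C(n+k-1, k).
   The (k+1)-st finite difference of a polynomial of degree k vanishes:
   sum_(j <= k+1) (-1)^j C(k+1, j) p(j) = 0. Splitting off j = 0 and dividing
   by k! gives the identity. *)
From mathcomp Require Import all_boot all_order all_algebra zify.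
Import GRing.Theory Num.Theory.
Local Open Scope ring_scope.

Section AltBinomialSum.

Variable R : comNzRingType.

Definition alt_binomial_sum (m : nat) (f : nat -> R) : R :=
  \sum_(j < m.+1) (-1) ^+ j * 'C(m, j)%:R * f j.

Lemma eq_alt_binomial_sum m {f g : nat -> R} :
  f =1 g -> alt_binomial_sum m f = alt_binomial_sum m g.
Proof. by move=> fg; apply: eq_bigr => j _; rewrite fg. Qed.

Lemma alt_binomial_sumS m (f : nat -> R) :
  alt_binomial_sum m.+1 f
  = alt_binomial_sum m f - alt_binomial_sum m (fun j => f j.+1).
Proof.
rewrite /alt_binomial_sum big_ord_recl /=.
under eq_bigr => i _ do rewrite /bump /= binS natrD mulrDr mulrDl.
rewrite big_split /= addrA; congr (_ + _).
  rewrite [in RHS]big_ord_recl /= [X in _ + X = _]big_ord_recr /= !bin0.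
  by rewrite (bin_small (ltnSn m)) mulr0 mul0r addr0.
rewrite -sumrN; apply: eq_bigr => i _.
by rewrite add1n exprS !mulN1r !mulNr.
Qed.

Lemma alt_binomial_sum_lincomb m r (c : nat -> R) (g : nat -> nat -> R) :
  alt_binomial_sum m (fun j => \sum_(e < r) c e * g e j)
  = \sum_(e < r) c e * alt_binomial_sum m (g e).
Proof.
rewrite /alt_binomial_sum; under eq_bigr => j _ do rewrite big_distrr.
rewrite exchange_big; apply: eq_bigr => e _; rewrite big_distrr.
by apply: eq_bigr => j _ /=; rewrite mulrCA.
Qed.

Lemma alt_binomial_sum_exp m d :
  (d < m)%N -> alt_binomial_sum m (fun j => j%:R ^+ d) = 0.
Proof.
elim: m d => [//|m IHm] d ltdm.
have binomial_shift j : j.+1%:R ^+ d = \sum_(e < d.+1) 'C(d, e)%:R * (j%:R : R) ^+ e.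
  by rewrite -natr1 exprD1n; apply: eq_bigr => e _; rewrite mulr_natl.
rewrite alt_binomial_sumS (eq_alt_binomial_sum m binomial_shift).
rewrite (alt_binomial_sum_lincomb _ _ (fun e => 'C(d, e)%:R) (fun e j => j%:R ^+ e)).
rewrite big_ord_recr /= binn mul1r big1 ?add0r ?subrr // => e _.
by rewrite IHm ?mulr0 // (leq_trans (ltn_ord e)).
Qed.

Lemma alt_binomial_sum_poly m (p : {poly R}) :
  (size p <= m)%N -> alt_binomial_sum m (fun j => p.[j%:R]) = 0.
Proof.
move=> le_p_m; rewrite (eq_alt_binomial_sum m (fun j => horner_coef p j%:R)).
rewrite (alt_binomial_sum_lincomb _ _ (fun e => p`_e) (fun e j => j%:R ^+ e)).
rewrite big1 // => e _.
by rewrite alt_binomial_sum_exp ?mulr0 // (leq_trans (ltn_ord e)).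
Qed.

End AltBinomialSum.

Lemma prod_rising m k : \prod_(t < k) (m.+1 + t)%N = (m + k) ^_ k.
Proof.
elim: k => [|k IHk]; first by rewrite big_ord0 ffactn0.
by rewrite big_ord_recr /= IHk addnS ffactSS addSn mulnC.
Qed.

Lemma natr_ffact (R : nzRingType) a k : (a ^_ k)%:R = \prod_(t < k) (a%:R - t%:R : R).
Proof.
elim: k => [|k IHk]; first by rewrite big_ord0 ffactn0.
rewrite big_ord_recr /= -IHk ffactnSr natrM.
case: (leqP k a) => [le_ka | lt_ak]; first by rewrite natrB.
by rewrite ffact_small ?mul0r.
Qed.

Definition shifted_ffact_poly (R : nzRingType) (n k : nat) : {poly R} :=
  \prod_(t < k) Poly [:: - (n + t)%N%:R; n%:R].

Section ShiftedFfactPoly.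

Variables (R : comNzRingType) (n k : nat).
Local Notation p := (shifted_ffact_poly R n k).

Lemma size_shifted_ffact_poly : (size p <= k.+1)%N.
Proof.
rewrite /shifted_ffact_poly; elim: k => [|k' IHk]; first by rewrite big_ord0 size_poly1.
rewrite big_ord_recr; apply: leq_trans (size_polyMleq _ _) _.
have /= := size_Poly [:: - ((n + k')%N%:R : R); n%:R].
move: IHk; set a := size _; set b := size _; lia.
Qed.

Lemma horner_shifted_ffact_poly x :
  p.[x] = \prod_(t < k) (n%:R * x - (n + t)%N%:R).
Proof.
rewrite horner_prod; apply: eq_bigr => t _.
by rewrite horner_Poly /= mul0r add0r addrC.
Qed.

Lemma shifted_ffact_polyS i : p.[i.+1%:R] = ((n * i) ^_ k)%N%:R.
Proof.
rewrite horner_shifted_ffact_poly natr_ffact; apply: eq_bigr => t _.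
by rewrite -natrM mulnS !natrD opprD addrACA subrr add0r.
Qed.

Lemma shifted_ffact_poly0 : (0 < n)%N -> p.[0] = (-1) ^+ k * ((n + k - 1) ^_ k)%N%:R.
Proof.
move=> n_gt0; rewrite horner_shifted_ffact_poly.
under eq_bigr => t _ do rewrite mulr0 sub0r.
rewrite prodrN card_ord -natr_prod.
by rewrite -{1}(prednK n_gt0) prod_rising -subn1 addnC addnBA // addnC.
Qed.

End ShiftedFfactPoly.

Lemma alt_sum_bin_bin_mul (n k : nat) : (0 < n)%N ->
  \sum_(i < k.+1) ((-1) ^+ i * 'C(k.+1, i.+1)%:R * 'C(n * i, k)%:R : int)
  = (-1) ^+ k * 'C(n + k - 1, k)%:R.
Proof.
move=> n_gt0.
have := @alt_binomial_sum_poly _ _ _ (size_shifted_ffact_poly int n k).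
rewrite /alt_binomial_sum big_ord_recl /= shifted_ffact_poly0 //.
under eq_bigr => i _ do rewrite /bump /= add1n shifted_ffact_polyS.
rewrite expr0 bin0 !mul1r => /eqP; rewrite addr_eq0 => /eqP sum_eq.
have kf_neq0 : (k`!%:R : int) != 0 by rewrite pnatr_eq0 -lt0n fact_gt0.
apply: (mulIf kf_neq0); rewrite mulr_suml -[RHS]mulrA -natrM bin_ffact sum_eq.
rewrite -sumrN; apply: eq_bigr => i _.
by rewrite -[LHS]mulrA -natrM bin_ffact exprS mulN1r !mulNr opprK.
Qed.

Theorem mainTheorem2 (n k : nat) (hn : (0 < n)%N) (hk : (0 < k)%N) :
  \sum_(1 <= i < k.+1) ((-1) ^+ i * ('C(n * i, k))%:R * ('C(k.+1, i.+1))%:R : int)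
  = (-1) ^+ k * ('C(n + k - 1, k))%:R.
Proof.
rewrite -(alt_sum_bin_bin_mul n k hn) big_ord_recl muln0 bin0n eqn0Ngt hk.
rewrite mulr0 add0r big_add1 big_mkord.
by apply: eq_bigr => i _; rewrite mulrAC.
Qed.
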